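(* Let $n\ge1$, let $g=(g_{ij})$ be a nondegenerate symmetric complex $n\times n$ matrix with inverse $\eta=(\eta_{ij})=g^{-1}$, and let $(\alpha^{ij})$ be a symmetric complex $n\times n$ matrix. Consider the system of hydrodynamic type $$u^i_t=\big(\eta_{nj}u^ju^i+\alpha^{ij}\eta_{jk}u^k\big)_x,\qquad i=1,\dots,n,$$ (summation over repeated indices), written as $u^i_t=A^i_k(u)u^k_x$ with $A^i_k=\eta_{nj}u^j\delta^i_k+u^i\eta_{nk}+\alpha^{ij}\eta_{jk}$. Then the Haantjes tensor of $A=(A^i_k(u))$ vanishes identically.
   Context: Regard $A$ as a field of endomorphisms of the tangent bundle of $\mathbb{C}^n$ with coordinates $u=(u^1,\dots,u^n)$. Its Nijenhuis tensor is $N_A(X,Y)=[AX,AY]-A[X,AY]-A[AX,Y]+A^2[X,Y]$ (with $[\,,\,]$ the Lie bracket of vector fields), and its Haantjes tensor is $H_A(X,Y)=N_A(AX,AY)-AN_A(X,AY)-AN_A(AX,Y)+A^2N_A(X,Y)$. *)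

From HB Require Import structures.
From mathcomp Require Import all_boot all_order all_algebra.
From mathcomp Require Import mpoly.
Set Implicit Arguments. Unset Strict Implicit. Unset Printing Implicit Defensive.
Import GRing.Theory Num.Theory.
Local Open Scope ring_scope.

(* Polynomial vector fields and endomorphism fields on C^n, coordinates u^i = 'X_i. *)
Section VF.
Variables (K : fieldType) (n : nat).

Definition vfield := 'I_n -> {mpoly K[n]}.
Definition endofield := 'I_n -> 'I_n -> {mpoly K[n]}.

Definition vact (X : vfield) (f : {mpoly K[n]}) : {mpoly K[n]} :=
  \sum_(k < n) X k * mderiv k f.

Definition lie (X Y : vfield) : vfield := fun i => vact X (Y i) - vact Y (X i).

Definition vadd (X Y : vfield) : vfield := fun i => X i + Y i.
Definition vsub (X Y : vfield) : vfield := fun i => X i - Y i.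

Definition eapp (A : endofield) (X : vfield) : vfield :=
  fun i => \sum_(k < n) A i k * X k.

Definition nijenhuis (A : endofield) (X Y : vfield) : vfield :=
  vadd (vsub (vsub (lie (eapp A X) (eapp A Y)) (eapp A (lie X (eapp A Y))))
             (eapp A (lie (eapp A X) Y)))
       (eapp A (eapp A (lie X Y))).

Definition haantjes (A : endofield) (X Y : vfield) : vfield :=
  vadd (vsub (vsub (nijenhuis A (eapp A X) (eapp A Y))
                   (eapp A (nijenhuis A X (eapp A Y))))
             (eapp A (nijenhuis A (eapp A X) Y)))
       (eapp A (eapp A (nijenhuis A X Y))).

End VF.

(* the last index n (i.e. n-1 in 0-based 'I_n), given n >= 1 *)
Definition ordlast (n : nat) (hn : (0 < n)%N) : 'I_n :=
  Ordinal (etrans (ltn_predL n) hn).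

Definition hydroA (K : fieldType) (n : nat) (hn : (0 < n)%N)
  (eta alpha : 'M[K]_n) : endofield K n :=
  fun i k =>
    (\sum_(j < n) (eta (ordlast hn) j)%:MP * 'X_j) * (i == k)%:R
    + 'X_i * (eta (ordlast hn) k)%:MP
    + (\sum_(j < n) alpha i j * eta j k)%:MP.

(* A = ℓ(u) Id + u ⊗ ℓ + B, where ℓ = η_{n·} is a constant linear form and
   B = αη is constant.  Hence the derivative of A along Z is W ↦ ℓ(Z) W + ℓ(W) Z,
   which is symmetric in Z and W; this collapses the Nijenhuis tensor to
   N(P,Q) = ℓ(AP) Q + ℓ(Q) AP - ℓ(AQ) P - ℓ(P) AQ, a combination of P, Q, AP, AQ
   with scalar coefficients, and the four terms of the Haantjes tensor built from
   it cancel identically. *)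

From HB Require Import structures.
From mathcomp Require Import all_boot all_order all_algebra.
From mathcomp Require Import mpoly.
From mathcomp Require Import ring.
From Stdlib Require Import FunctionalExtensionality.
Set Implicit Arguments.
Unset Strict Implicit.
Unset Printing Implicit Defensive.
Import GRing.Theory.
Local Open Scope ring_scope.

Section VectorFieldCalculus.
Variables (K : fieldType) (n : nat).
Local Notation R := {mpoly K[n]}.
Implicit Types (X Y Z W P Q : vfield K n) (A : endofield K n) (f g : R).

Lemma mderiv_mX (i j : 'I_n) : mderiv i ('X_j : R) = (j == i)%:R.
Proof.
rewrite mderivX mnm1E; case: eqP => [->|_]; last by rewrite scale0r.
have -> : (U_(i) - U_(i) = 0)%MM by apply/mnmP => k; rewrite mnmBE subnn mnm0E.
by rewrite mpolyX0 scale1r.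
Qed.

Lemma vactD X f g : vact X (f + g) = vact X f + vact X g.
Proof. by rewrite /vact -big_split; apply: eq_bigr => k _; rewrite mderivD mulrDr. Qed.

Lemma vactM X f g : vact X (f * g) = vact X f * g + f * vact X g.
Proof.
rewrite /vact mulr_suml mulr_sumr -big_split; apply: eq_bigr => k _.
by rewrite mderivM /=; ring.
Qed.

Lemma vactC X c : vact X c%:MP = 0.
Proof. by rewrite /vact big1 // => k _; rewrite mderivC mulr0. Qed.

Lemma vact_nat X m : vact X m%:R = 0.
Proof. by rewrite -(rmorph_nat (@mpolyC n K)) vactC. Qed.

Lemma vactX X j : vact X 'X_j = X j.
Proof.
rewrite /vact (bigD1 j) //= mderiv_mX eqxx mulr1 big1 ?addr0 // => k /negbTE.
by rewrite mderiv_mX eq_sym => ->; rewrite mulr0.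
Qed.

Lemma vact_sum X (F : 'I_n -> R) : vact X (\sum_j F j) = \sum_j vact X (F j).
Proof.
rewrite /vact exchange_big /=; apply: eq_bigr => k _.
by rewrite raddf_sum mulr_sumr.
Qed.

Lemma eappD A P Q :
  eapp A (fun k => P k + Q k) = (fun i => eapp A P i + eapp A Q i).
Proof.
apply: functional_extensionality => i; rewrite /eapp -big_split.
by apply: eq_bigr => k _; rewrite mulrDr.
Qed.

Lemma eappB A P Q :
  eapp A (fun k => P k - Q k) = (fun i => eapp A P i - eapp A Q i).
Proof.
apply: functional_extensionality => i; rewrite /eapp -sumrB.
by apply: eq_bigr => k _; rewrite mulrBr.
Qed.

Lemma eappMl A f P : eapp A (fun k => f * P k) = (fun i => f * eapp A P i).
Proof.
apply: functional_extensionality => i; rewrite /eapp mulr_sumr.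
by apply: eq_bigr => k _; rewrite mulrCA.
Qed.

Lemma eappMr A f P : eapp A (fun k => P k * f) = (fun i => eapp A P i * f).
Proof.
apply: functional_extensionality => i; rewrite /eapp mulr_suml.
by apply: eq_bigr => k _; rewrite mulrA.
Qed.

Definition endo_deriv Z A : endofield K n := fun i k => vact Z (A i k).

Lemma vact_eapp Z A W :
  (fun k => vact Z (eapp A W k)) =
  (fun k => eapp (endo_deriv Z A) W k + eapp A (fun l => vact Z (W l)) k).
Proof.
apply: functional_extensionality => k.
by rewrite /eapp vact_sum -big_split; apply: eq_bigr => l _; rewrite vactM.
Qed.

(* The second derivatives of the components of X and Y cancel, leaving the
   classical expression of N_A through the derivative of A only. *)
Lemma nijenhuisE A X Y i : nijenhuis A X Y i =
  eapp (endo_deriv (eapp A X) A) Y i - eapp (endo_deriv (eapp A Y) A) X i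
  - (eapp A (eapp (endo_deriv X A) Y) i - eapp A (eapp (endo_deriv Y A) X) i).
Proof.
have vact_eappE Z W k := congr1 (fun F => F k) (vact_eapp Z A W).
rewrite /nijenhuis /vadd /vsub /lie !eappB !vact_eapp !eappD !vact_eappE /=.
ring.
Qed.

Section SymmetricDerivative.
Variables (A : endofield K n) (ell : vfield K n -> R).
Hypothesis endo_derivE :
  forall Z W i, eapp (endo_deriv Z A) W i = ell Z * W i + Z i * ell W.

Lemma nijenhuis_symmetric_deriv P Q : nijenhuis A P Q = fun i =>
  ell (eapp A P) * Q i + eapp A P i * ell Q
  - ell (eapp A Q) * P i - eapp A Q i * ell P.
Proof.
apply: functional_extensionality => i; rewrite nijenhuisE.
have -> : eapp A (eapp (endo_deriv P A) Q) i = eapp A (eapp (endo_deriv Q A) P) i.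
  by congr eapp; apply: functional_extensionality => l; rewrite !endo_derivE; ring.
by rewrite !endo_derivE; ring.
Qed.

Lemma haantjes_symmetric_deriv X Y : haantjes A X Y = fun _ => 0.
Proof.
rewrite /haantjes /vadd /vsub !nijenhuis_symmetric_deriv.
rewrite !eappB !eappD !eappMl !eappMr.
by apply: functional_extensionality => i; ring.
Qed.

End SymmetricDerivative.

End VectorFieldCalculus.

Section Hydrodynamic.
Variables (K : fieldType) (n : nat) (hn : (0 < n)%N) (eta alpha : 'M[K]_n).
Local Notation A := (hydroA hn eta alpha).

Definition eta_last_form (W : vfield K n) : {mpoly K[n]} :=
  \sum_(j < n) (eta (ordlast hn) j)%:MP * W j.

Lemma endo_deriv_hydroA Z :
  endo_deriv Z A =
  fun i k => eta_last_form Z * (i == k)%:R + Z i * (eta (ordlast hn) k)%:MP.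
Proof.
apply: functional_extensionality => i; apply: functional_extensionality => k.
rewrite /endo_deriv /hydroA !vactD !vactM vact_sum vact_nat !vactC vactX.
have -> : \sum_j vact Z ((eta (ordlast hn) j)%:MP * 'X_j) = eta_last_form Z.
  by apply: eq_bigr => j _; rewrite vactM vactC vactX mul0r add0r.
ring.
Qed.

Lemma eapp_endo_deriv_hydroA Z W i :
  eapp (endo_deriv Z A) W i = eta_last_form Z * W i + Z i * eta_last_form W.
Proof.
rewrite endo_deriv_hydroA /eapp.
transitivity (\sum_k eta_last_form Z * (i == k)%:R * W k + Z i * eta_last_form W).
  rewrite /eta_last_form mulr_sumr -big_split; apply: eq_bigr => k _ /=; ring.
congr (_ + _); rewrite (bigD1 i) //= eqxx big1 ?addr0; first by rewrite mulr1.
by move=> k; rewrite eq_sym => /negbTE ->; rewrite mulr0 mul0r.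
Qed.

End Hydrodynamic.

Theorem proposition7p1 (C : numClosedFieldType) (n : nat) (hn : (0 < n)%N)
  (g alpha : 'M[C]_n) :
  g^T = g -> g \in unitmx -> alpha^T = alpha ->
  forall X Y : vfield C n,
    haantjes (hydroA hn (invmx g) alpha) X Y = (fun _ => 0).
Proof.
move=> _ _ _ X Y.
exact: (haantjes_symmetric_deriv (eapp_endo_deriv_hydroA hn (invmx g) alpha)).
Qed.
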